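(* (Soundness and Completeness) A sequent of formulas of Basic Hybrid Logic $\mathscr{H}(@)$ is valid in all hybrid models iff it is provable in the calculus $\mathbf{G}'$.
   Context: Fix pairwise disjoint sets $\mathsf{Prop}$ (countably infinite), $\mathsf{Nom}$ (nominals, countably infinite) and $\mathsf{Mod}$ (finite). Formulas of $\mathscr{H}(@)$: $\varphi,\psi ::= p\mid i\mid\bot\mid\varphi\to\psi\mid @_i\varphi\mid\langle\mathsf a\rangle\varphi$ with $p\in\mathsf{Prop}$, $i\in\mathsf{Nom}$, $\mathsf a\in\mathsf{Mod}$ (other connectives are the usual abbreviations, e.g. $\neg\varphi:=\varphi\to\bot$). A hybrid model is $\mathcal M=\langle N,\{R_{\mathsf a}\}_{\mathsf a\in\mathsf{Mod}},g,V\rangle$ with $N\ne\emptyset$, $R_{\mathsf a}\subseteq N\times N$, $g:\mathsf{Nom}\to N$, $V:\mathsf{Prop}\to 2^N$; satisfaction: $\mathcal M,n\Vdash p$ iff $n\in V(p)$; $\mathcal M,n\Vdash i$ iff $g(i)=n$; $\bot$ never; $\to$ classical; $\mathcal M,n\Vdash @_i\varphi$ iff $\mathcal M,g(i)\Vdash\varphi$; $\mathcal M,n\Vdash\langle\mathsf a\rangle\varphi$ iff some $n'$ with $nR_{\mathsf a}n'$ has $\mathcal M,n'\Vdash\varphi$. A sequent $\Gamma\vdash\Delta$ here consists of finite (possibly empty) sets $\Gamma,\Delta$ of formulas of the form $@_i\varphi$ with $\varphi$ an $\mathscr H(@)$ formula; it is valid in all hybrid models iff for every hybrid model $\mathcal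 M$ and node $n$, if $\mathcal M,n\Vdash\gamma$ for all $\gamma\in\Gamma$ then $\mathcal M,n\Vdash\delta$ for some $\delta\in\Delta$. ''$\varphi,\Gamma$'' means $\{\varphi\}\cup\Gamma$. The calculus $\mathbf G'$ has the following rules (premisses $\Rightarrow$ conclusion), all restricted to such sequents: (Ax) axiom $\varphi,\Gamma\vdash\Delta,\varphi$ with $\varphi$ of the form $@_ip$ or $@_ij$; ($\bot$) axiom $@_i\bot,\Gamma\vdash\Delta$; ($\to$L) $\Gamma\vdash\Delta,@_i\varphi$ and $@_i\psi,\Gamma\vdash\Delta\Rightarrow @_i(\varphi\to\psi),\Gamma\vdash\Delta$; ($\to$R) $@_i\varphi,\Gamma\vdash\Delta,@_i\psi\Rightarrow\Gamma\vdash\Delta,@_i(\varphi\to\psi)$; ($@$T) $@_ii,\Gamma\vdash\Delta\Rightarrow\Gamma\vdash\Delta$; ($@5$) $@_jk,@_ij,@_ik,\Gamma\vdash\Delta\Rightarrow @_ij,@_ik,\Gamma\vdash\Delta$; (Nom) $@_ij,\Gamma\vdash\Delta\Rightarrow\Gamma\vdash\Delta$, $j$ not in the conclusion; (S$_1$) $@_j\varphi,@_ij,@_i\varphi,\Gamma\vdash\Delta\Rightarrow @_ij,@_i\varphi,\Gamma\vdash\Delta$, $\varphi$ of the form $p$, $\bot$ or $\langle\mathsf a\rangle k$; (S$_2$) $@_i\langle\mathsf a\rangle k,@_jk,@_i\langle\mathsf a\rangle j,\Gamma\vdash\Delta\Rightarrow @_jk,@_i\langle\mathsf a\rangle j,\Gamma\vdash\Delta$;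 ($@$L) $@_i\varphi,\Gamma\vdash\Delta\Rightarrow @_j@_i\varphi,\Gamma\vdash\Delta$; ($@$R) $\Gamma\vdash\Delta,@_i\varphi\Rightarrow\Gamma\vdash\Delta,@_j@_i\varphi$; ($\langle\mathsf a\rangle$L) $@_i\langle\mathsf a\rangle j,@_j\varphi,\Gamma\vdash\Delta\Rightarrow @_i\langle\mathsf a\rangle\varphi,\Gamma\vdash\Delta$, $j$ not in the conclusion; ($\langle\mathsf a\rangle$R) $@_i\langle\mathsf a\rangle j,\Gamma\vdash\Delta,@_i\langle\mathsf a\rangle\varphi,@_j\varphi\Rightarrow @_i\langle\mathsf a\rangle j,\Gamma\vdash\Delta,@_i\langle\mathsf a\rangle\varphi$; (Cut) $\Gamma\vdash\Delta,\varphi$ and $\varphi,\Gamma'\vdash\Delta'\Rightarrow\Gamma,\Gamma'\vdash\Delta,\Delta'$; (WL) $\Gamma\vdash\Delta\Rightarrow\varphi,\Gamma\vdash\Delta$; (WR) $\Gamma\vdash\Delta\Rightarrow\Gamma\vdash\Delta,\varphi$. A sequent is provable in $\mathbf G'$ if it is the root of a finite derivation tree built from these rules all of whose leaves are instances of (Ax) or ($\bot$). *)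

From mathcomp Require Import ssreflect ssrbool fintype.
From Stdlib Require Import List.

Set Implicit Arguments.

(* Prop and Nom are both countably infinite: we take nat for each
   (the constructors keep them disjoint from each other and from Mod). *)
Definition prop_sym := nat.
Definition nom := nat.

Section Syntax.
Variable Mod : Type.

Inductive form : Type :=
| FProp : prop_sym -> form
| FNom  : nom -> form
| FBot  : form
| FImp  : form -> form -> form
| FAt   : nom -> form -> form
| FDia  : Mod -> form -> form.

(* A sequent formula is of the form @_i phi; we represent it as the pair
   (i, phi).  So (j, FAt i phi) is @_j @_i phi. *)
Definition lform := (nom * form)%type.

Fixpoint nom_occurs (j : nom) (phi : form) : Prop :=
  match phi with
  | FProp _ => False
  | FNom k => k = j
  | FBot => False
  | FImp a b => nom_occurs j a \/ nom_occurs j b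
  | FAt i a => i = j \/ nom_occurs j a
  | FDia _ a => nom_occurs j a
  end.

Definition nom_occurs_l (j : nom) (f : lform) : Prop :=
  fst f = j \/ nom_occurs j (snd f).

Definition nom_in_seq (j : nom) (G D : list lform) : Prop :=
  exists f, (In f G \/ In f D) /\ nom_occurs_l j f.

Definition same_set (A B : list lform) : Prop := forall f, In f A <-> In f B.

End Syntax.

Arguments FBot {Mod}.
Arguments FProp {Mod}.
Arguments FNom {Mod}.

Record model (Mod : Type) : Type := Model {
  node : Type;
  rel  : Mod -> node -> node -> Prop;
  gnom : nom -> node;
  val  : prop_sym -> node -> Prop
}.

Fixpoint sat (Mod : Type) (M : model Mod) (n : node M) (phi : form Mod) : Prop :=
  match phi with
  | FProp p => val M p n
  | FNom i => gnom M i = n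
  | FBot => False
  | FImp a b => sat M n a -> sat M n b
  | FAt i a => sat M (gnom M i) a
  | FDia a b => exists n', rel M a n n' /\ sat M n' b
  end.

Definition sat_l (Mod : Type) (M : model Mod) (n : node M) (f : lform Mod) : Prop :=
  sat M n (FAt (fst f) (snd f)).

(* validity of a sequent in all hybrid models (nonemptiness of the node set
   is automatic, since the node n is given). *)
Definition valid (Mod : Type) (G D : list (lform Mod)) : Prop :=
  forall (M : model Mod) (n : node M),
    (forall g, In g G -> sat_l M n g) -> exists d, In d D /\ sat_l M n d.

(* Sequents are finite SETS; we represent them by lists,
   "phi, Gamma" being phi :: Gamma, and close provability under replacing
   a list by one with the same elements (rule [P_set]), so that provability
   depends only on the underlying sets. *)
Inductive G'prov (Mod : Type) : list (lform Mod) -> list (lform Mod) -> Prop :=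
| P_set : forall G D G' D', same_set G G' -> same_set D D' ->
    G'prov G D -> G'prov G' D'
| P_ax_prop : forall i p G D,
    G'prov ((i, FProp p) :: G) ((i, FProp p) :: D)
| P_ax_nom : forall i j G D,
    G'prov ((i, FNom j) :: G) ((i, FNom j) :: D)
| P_bot : forall i G D, G'prov ((i, FBot) :: G) D
| P_impL : forall i phi psi G D,
    G'prov G ((i, phi) :: D) -> G'prov ((i, psi) :: G) D ->
    G'prov ((i, FImp phi psi) :: G) D
| P_impR : forall i phi psi G D,
    G'prov ((i, phi) :: G) ((i, psi) :: D) ->
    G'prov G ((i, FImp phi psi) :: D)
| P_atT : forall i G D,
    G'prov ((i, FNom i) :: G) D -> G'prov G D
| P_at5 : forall i j k G D,
    G'prov ((j, FNom k) :: (i, FNom j) :: (i, FNom k) :: G) D ->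
    G'prov ((i, FNom j) :: (i, FNom k) :: G) D
| P_nom : forall i j G D,
    ~ nom_in_seq j G D ->
    G'prov ((i, FNom j) :: G) D -> G'prov G D
| P_S1 : forall i j phi G D,
    ((exists p, phi = FProp p) \/ phi = FBot \/
     (exists a k, phi = FDia a (FNom k))) ->
    G'prov ((j, phi) :: (i, FNom j) :: (i, phi) :: G) D ->
    G'prov ((i, FNom j) :: (i, phi) :: G) D
| P_S2 : forall i j k a G D,
    G'prov ((i, FDia a (FNom k)) :: (j, FNom k) :: (i, FDia a (FNom j)) :: G) D ->
    G'prov ((j, FNom k) :: (i, FDia a (FNom j)) :: G) D
| P_atL : forall i j phi G D,
    G'prov ((i, phi) :: G) D -> G'prov ((j, FAt i phi) :: G) D
| P_atR : forall i j phi G D,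
    G'prov G ((i, phi) :: D) -> G'prov G ((j, FAt i phi) :: D)
| P_diaL : forall i j a phi G D,
    ~ nom_in_seq j ((i, FDia a phi) :: G) D ->
    G'prov ((i, FDia a (FNom j)) :: (j, phi) :: G) D ->
    G'prov ((i, FDia a phi) :: G) D
| P_diaR : forall i j a phi G D,
    G'prov ((i, FDia a (FNom j)) :: G) ((i, FDia a phi) :: (j, phi) :: D) ->
    G'prov ((i, FDia a (FNom j)) :: G) ((i, FDia a phi) :: D)
| P_cut : forall f G D G' D',
    G'prov G (f :: D) -> G'prov (f :: G') D' -> G'prov (G ++ G') (D ++ D')
| P_WL : forall f G D, G'prov G D -> G'prov (f :: G) D
| P_WR : forall f G D, G'prov G D -> G'prov G (f :: D).

From Pilot Require Import Defs.
From mathcomp Require Import ssreflect ssrfun ssrbool choice fintype.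
From Stdlib Require Import List Arith Lia Classical ClassicalEpsilon FunctionalExtensionality PropExtensionality.
Import ListNotations.

(* For the eigenvariable rules (Nom) and
   (<a>L) the fresh nominal j is reinterpreted as the node the premiss needs
   (g(i), resp. an a-successor witnessing the diamond); since j does not occur in
   the conclusion, no other formula changes its truth value.

   Completeness is a Lindenbaum construction.  Starting from an unprovable
   sequent and enumerating all formulas @_i phi, each formula is put on the right
   unless that makes the sequent provable, in which case it goes to the left; by
   (Cut) the stages stay unprovable.  A diamond formula going to the left brings
   a fresh witness along, as in (<a>L).  In the limit (Gw, Dw) every formula lies
   on exactly one side and Gw is closed under derivability, hence a Hintikka set.
   The canonical model has as nodes the classes of nominals under
   i ~ j <-> @_i j in Gw (an equivalence by (@T) and (@5)); (S1) makes valuation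
   and accessibility independent of representatives, and the truth lemma shows
   that it satisfies exactly Gw, refuting the original sequent. *)

Ltac solve_incl := let x := fresh "x" in intro x; cbn; rewrite ?in_app_iff; tauto.

Section Soundness.
Context {Mod : Type}.
Implicit Types (M : model Mod) (G D : list (lform Mod)).

Definition set_nom M (j : nom) (x : node M) : model Mod :=
  Model (Defs.rel M) (fun k => if Nat.eqb k j then x else gnom M k) (Defs.val M).

Lemma sat_set_nom_fresh M j x (phi : form Mod) :
  ~ nom_occurs j phi -> forall n, sat (set_nom M j x) n phi <-> sat M n phi.
Proof.
  induction phi as [p|k| |a IHa b IHb|k a IHa|m a IHa]; cbn; intros Hj n.
  - tauto.
  - destruct (Nat.eqb_spec k j); tauto.
  - tauto.
  - rewrite (IHa (fun h => Hj (or_introl h)) n) (IHb (fun h => Hj (or_intror h)) n).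
    tauto.
  - destruct (Nat.eqb_spec k j); [tauto|]. apply IHa. tauto.
  - split; intros [n' [Hr Hs]]; exists n'; split; auto; apply (IHa Hj n'); auto.
Qed.

Lemma sat_l_set_nom_fresh M j x (f : lform Mod) n :
  ~ nom_occurs_l j f -> sat_l (set_nom M j x) n f <-> sat_l M n f.
Proof.
  destruct f as [i phi]; unfold sat_l, nom_occurs_l; cbn; intros Hj.
  destruct (Nat.eqb_spec i j); [tauto|]. apply sat_set_nom_fresh. tauto.
Qed.

Lemma sat_l_set_nom_seq {M x n j G D f} :
  ~ nom_in_seq j G D -> In f G \/ In f D ->
  sat_l (set_nom M j x) n f <-> sat_l M n f.
Proof.
  intros Hj Hf. apply sat_l_set_nom_fresh. intros Ho. apply Hj. exists f; auto.
Qed.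

Lemma valid_nom_rule {i j G D} :
  ~ nom_in_seq j G D -> valid ((i, FNom j) :: G) D -> valid G D.
Proof.
  intros Hj Hv M n HG.
  destruct (Hv (set_nom M j (gnom M i)) n) as [d [Hd Hsat]].
  - intros g [<-|Hg].
    + cbn. rewrite Nat.eqb_refl. destruct (Nat.eqb_spec i j); reflexivity.
    + apply (sat_l_set_nom_seq Hj); auto.
  - exists d; split; auto. eapply (sat_l_set_nom_seq Hj); eauto.
Qed.

Lemma valid_diaL_rule {i j a phi G D} :
  ~ nom_in_seq j ((i, FDia a phi) :: G) D ->
  valid ((i, FDia a (FNom j)) :: (j, phi) :: G) D ->
  valid ((i, FDia a phi) :: G) D.
Proof.
  intros Hj Hv M n HG.
  assert (Hsucc : exists n', Defs.rel M a (gnom M i) n' /\ sat M n' phi)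
    by exact (HG _ (in_eq _ _)).
  destruct Hsucc as [n' [Hr Hs]].
  assert (Hij : i <> j).
  { intros <-. apply Hj. exists (i, FDia a phi). cbn. split; [left; left|left]; auto. }
  assert (Hphi : ~ nom_occurs j phi).
  { intros Ho. apply Hj. exists (i, FDia a phi). cbn. split; [left; left|right]; auto. }
  destruct (Hv (set_nom M j n') n) as [d [Hd Hsat]].
  - intros g [<-|[<-|Hg]].
    + cbn. rewrite Nat.eqb_refl. apply Nat.eqb_neq in Hij as ->. exists n'; auto.
    + cbn. rewrite Nat.eqb_refl. apply sat_set_nom_fresh; auto.
    + apply (sat_l_set_nom_seq Hj); [cbn; auto|]. apply HG. cbn; auto.
  - exists d; split; auto. eapply (sat_l_set_nom_seq Hj); eauto.
Qed.

Lemma valid_impR_rule {i phi psi G D} :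
  valid ((i, phi) :: G) ((i, psi) :: D) -> valid G ((i, FImp phi psi) :: D).
Proof.
  intros Hv M n HG.
  destruct (classic (sat M (gnom M i) phi)) as [Hp|Hp].
  - destruct (Hv M n) as [d [[<-|Hd] Hs]]; [intros g [<-|Hg]; auto| |].
    + exists (i, FImp phi psi). split; cbn; auto.
    + exists d. split; cbn; auto.
  - exists (i, FImp phi psi). split; cbn; [auto|tauto].
Qed.

Lemma valid_cut_rule {f G D G' D'} :
  valid G (f :: D) -> valid (f :: G') D' -> valid (G ++ G') (D ++ D').
Proof.
  intros Hv1 Hv2 M n HG.
  destruct (Hv1 M n) as [d [[<-|Hd] Hs]]; [intros g Hg; apply HG, in_or_app; auto| |].
  - destruct (Hv2 M n) as [d' [Hd' Hs']].
    + intros g [<-|Hg]; auto. apply HG, in_or_app; auto.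
    + exists d'. split; auto. apply in_or_app; auto.
  - exists d. split; auto. apply in_or_app; auto.
Qed.

Lemma soundness G D : G'prov G D -> valid G D.
Proof.
  induction 1 as [G D G' D' HG HD _ IH | | | | i phi psi G D _ IH1 _ IH2
    | i phi psi G D _ IH | i G D _ IH | i j k G D _ IH | i j G D Hj _ IH
    | i j phi G D _ _ IH | i j k a G D _ IH | i j phi G D _ IH | i j phi G D _ IH
    | i j a phi G D Hj _ IH | i j a phi G D _ IH | f G D G' D' _ IH1 _ IH2
    | f G D _ IH | f G D _ IH];
    try (apply (valid_impR_rule IH) || apply (valid_nom_rule Hj IH) ||
         apply (valid_diaL_rule Hj IH) || apply (valid_cut_rule IH1 IH2));
    intros M n HGs; unfold valid, sat_l in *; cbn in *.
  - destruct (IH M n) as [d [Hd Hs]]; [intros g Hg; apply HGs, HG; auto|].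
    exists d; split; auto. apply HD; auto.
  - exists (i, FProp p). split; [left|apply (HGs (i, FProp p))]; auto.
  - exists (i, FNom j). split; [left|apply (HGs (i, FNom j))]; auto.
  - destruct (HGs (i, FBot)); auto.
  - destruct (IH1 M n) as [d [[<-|Hd] Hs]]; [intros g Hg; apply HGs; auto| |eauto].
    apply (IH2 M n). intros g [<-|Hg]; [apply (HGs (i, FImp phi psi))|apply HGs]; auto.
  - apply (IH M n). intros g [<-|Hg]; cbn; auto.
  - apply (IH M n). intros g [<-|Hg]; [|apply HGs; tauto].
    pose proof (HGs (i, FNom j) (or_introl Logic.eq_refl)) as Hij.
    pose proof (HGs (i, FNom k) (or_intror (or_introl Logic.eq_refl))) as Hik.
    cbn in *. congruence.
  - apply (IH M n). intros g [<-|Hg]; [|apply HGs; tauto].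
    pose proof (HGs (i, FNom j) (or_introl Logic.eq_refl)) as Hij.
    pose proof (HGs (i, phi) (or_intror (or_introl Logic.eq_refl))) as Hiphi.
    cbn in *. rewrite Hij. exact Hiphi.
  - apply (IH M n). intros g [<-|Hg]; [|apply HGs; tauto].
    pose proof (HGs (j, FNom k) (or_introl Logic.eq_refl)) as Hjk.
    destruct (HGs (i, FDia a (FNom j)) (or_intror (or_introl Logic.eq_refl))) as [n' [Hr Hs]].
    exists n'. cbn in *. split; congruence.
  - apply (IH M n). intros g [<-|Hg]; [apply (HGs (j, FAt i phi))|apply HGs]; auto.
  - destruct (IH M n) as [d [[<-|Hd] Hs]]; auto.
    + exists (j, FAt i phi). split; cbn; auto.
    + eauto.
  - destruct (IH M n) as [d [[<-|[<-|Hd]] Hs]]; auto.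
    + exists (i, FDia a phi). split; cbn; auto.
    + exists (i, FDia a phi). split; cbn; auto.
      destruct (HGs (i, FDia a (FNom j)) (or_introl Logic.eq_refl)) as [n' [Hr Hj]].
      exists n'. cbn in *. subst n'. auto.
    + eauto.
  - apply (IH M n). intros g Hg. apply HGs; auto.
  - destruct (IH M n) as [d [Hd Hs]]; auto. exists d. split; cbn; auto.
Qed.

End Soundness.

Section Provability.
Context {Mod : Type}.
Implicit Types (G D : list (lform Mod)).

Lemma G'prov_weaken {G D G' D'} :
  G'prov G D -> incl G G' -> incl D D' -> G'prov G' D'.
Proof.
  intros H HG HD.
  assert (Hw : G'prov (G' ++ G) (D' ++ D)).
  { clear HG HD. induction G' as [|g G' IH]; cbn.
    - induction D' as [|d D' IH]; cbn; auto using P_WR.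
    - auto using P_WL. }
  apply (P_set (G := G' ++ G) (D := D' ++ D)); [| |exact Hw];
    intro f; rewrite in_app_iff; split; auto; intros [?|?]; auto.
Qed.

Fixpoint nom_bound (phi : form Mod) : nat :=
  match phi with
  | FNom k => S k
  | FImp a b => max (nom_bound a) (nom_bound b)
  | FAt i a => max (S i) (nom_bound a)
  | FDia _ a => nom_bound a
  | _ => 0
  end.

Lemma nom_bound_spec {j phi} : nom_occurs j phi -> j < nom_bound phi.
Proof.
  induction phi as [p|k| |a IHa b IHb|k a IHa|m a IHa]; cbn [nom_occurs nom_bound]; intros Hj.
  - tauto.
  - lia.
  - tauto.
  - destruct Hj as [Hj|Hj]; [pose proof (IHa Hj)|pose proof (IHb Hj)]; lia.
  - destruct Hj as [<-|Hj]; [|pose proof (IHa Hj)]; lia.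
  - auto.
Qed.

Definition nom_bound_l (f : lform Mod) : nat := max (S (fst f)) (nom_bound (snd f)).

Definition fresh_nom G D : nom := list_max (map nom_bound_l (G ++ D)).

Lemma fresh_nom_spec G D : ~ nom_in_seq (fresh_nom G D) G D.
Proof.
  intros [f [Hf Hj]].
  assert (Hlt : fresh_nom G D < nom_bound_l f).
  { destruct Hj as [Hj|Hj]; unfold nom_bound_l; [|pose proof (nom_bound_spec Hj)]; lia. }
  assert (Hle : nom_bound_l f <= fresh_nom G D).
  { pose proof (proj1 (list_max_le (map nom_bound_l (G ++ D)) _) (le_n _)) as Hmax.
    rewrite Forall_forall in Hmax. apply Hmax, in_map, in_or_app. exact Hf. }
  lia.
Qed.

Lemma G'prov_id phi : forall i G D, G'prov ((i, phi) :: G) ((i, phi) :: D).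
Proof.
  induction phi as [p|k| |a IHa b IHb|k a IHa|m a IHa]; intros i G D.
  - apply P_ax_prop.
  - apply P_ax_nom.
  - apply P_bot.
  - apply P_impR.
    apply (G'prov_weaken (G := (i, FImp a b) :: (i, a) :: G) (D := (i, b) :: D));
      [|solve_incl|solve_incl].
    apply P_impL; [|apply IHb].
    apply (G'prov_weaken (IHa i G ((i, b) :: D))); solve_incl.
  - apply P_atL, P_atR, IHa.
  - set j := fresh_nom ((i, FDia m a) :: G) ((i, FDia m a) :: D).
    apply (P_diaL (j := j)); [apply fresh_nom_spec|].
    apply P_diaR.
    apply (G'prov_weaken (IHa j ((i, FDia m (FNom j)) :: G) ((i, FDia m a) :: D)));
      solve_incl.
Qed.

End Provability.

Lemma incl_chain_stage {A : Type} (c : nat -> list A) :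
  (forall n m, n <= m -> incl (c n) (c m)) ->
  forall L, (forall x, In x L -> exists n, In x (c n)) ->
  exists N, incl L (c N).
Proof.
  intros Hc L. induction L as [|a L IH]; intros HL.
  - exists 0. apply incl_nil_l.
  - destruct (HL a (in_eq _ _)) as [n Hn].
    destruct IH as [N HN]; [intros x Hx; apply HL, in_cons, Hx|].
    exists (max n N). intros x [<-|Hx].
    + apply (Hc n); [lia|exact Hn].
    + apply (Hc N); [lia|apply HN, Hx].
Qed.

Section FormCode.
Context {Mod : Type}.

Fixpoint form_code (phi : form Mod) : GenTree.tree (nat + Mod) :=
  match phi with
  | FProp p => GenTree.Node 0 [GenTree.Leaf (inl p)]
  | FNom k => GenTree.Node 1 [GenTree.Leaf (inl k)]
  | FBot => GenTree.Node 2 []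
  | FImp a b => GenTree.Node 3 [form_code a; form_code b]
  | FAt i a => GenTree.Node 4 [GenTree.Leaf (inl i); form_code a]
  | FDia m a => GenTree.Node 5 [GenTree.Leaf (inr m); form_code a]
  end.

Fixpoint form_decode (t : GenTree.tree (nat + Mod)) : form Mod :=
  match t with
  | GenTree.Node 0 [GenTree.Leaf (inl p)] => FProp p
  | GenTree.Node 1 [GenTree.Leaf (inl k)] => FNom k
  | GenTree.Node 3 [a; b] => FImp (form_decode a) (form_decode b)
  | GenTree.Node 4 [GenTree.Leaf (inl i); a] => FAt i (form_decode a)
  | GenTree.Node 5 [GenTree.Leaf (inr m); a] => FDia m (form_decode a)
  | _ => FBot
  end.

Lemma form_codeK : cancel form_code form_decode.
Proof. intros phi; induction phi; cbn; congruence. Qed.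

End FormCode.

Section Completeness.
Variable Mod : countType.
Implicit Types (G D : list (lform Mod)) (f : lform Mod).

Definition lform_enum (n : nat) : lform Mod :=
  match (unpickle n : option (nat * GenTree.tree (nat + Mod))) with
  | Some (i, t) => (i, form_decode t)
  | None => (0, FBot)
  end.

Lemma lform_enum_surj f : exists n, lform_enum n = f.
Proof.
  destruct f as [i phi].
  exists (pickle ((i, form_code phi) : nat * GenTree.tree (nat + Mod))).
  unfold lform_enum. rewrite pickleK form_codeK. reflexivity.
Qed.

Definition add_left f G D : list (lform Mod) :=
  match f with
  | (i, FDia a phi) =>
      let j := fresh_nom (f :: G) D in (i, FDia a (FNom j)) :: (j, phi) :: f :: G
  | _ => f :: G
  end.

Lemma add_left_incl f G D : incl (f :: G) (add_left f G D).
Proof. destruct f as [i []]; cbn; solve_incl. Qed.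

Lemma add_left_unprovable f G D : ~ G'prov (f :: G) D -> ~ G'prov (add_left f G D) D.
Proof.
  destruct f as [i []]; cbn; auto.
  intros Hn Hp. apply Hn.
  apply (G'prov_weaken (G := (i, FDia s f) :: (i, FDia s f) :: G) (D := D));
    [|solve_incl|solve_incl].
  apply (P_diaL (j := fresh_nom ((i, FDia s f) :: G) D)); [|exact Hp].
  intros [g [Hg Hj]]. apply (fresh_nom_spec ((i, FDia s f) :: G) D).
  exists g. cbn in *. tauto.
Qed.

Variables G0 D0 : list (lform Mod).
Hypothesis G0_D0_unprovable : ~ G'prov G0 D0.

Fixpoint stage (n : nat) : list (lform Mod) * list (lform Mod) :=
  match n with
  | 0 => (G0, D0)
  | S n =>
      let: (G, D) := stage n in
      let f := lform_enum n in
      if excluded_middle_informative (G'prov G (f :: D))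
      then (add_left f G D, D) else (G, f :: D)
  end.

Lemma stage_step n :
  let: (G, D) := stage n in
  let f := lform_enum n in
  (G'prov G (f :: D) /\ stage (S n) = (add_left f G D, D)) \/
  (~ G'prov G (f :: D) /\ stage (S n) = (G, f :: D)).
Proof.
  cbn. destruct (stage n) as [G D].
  destruct excluded_middle_informative as [Hr|Hr]; [left|right]; auto.
Qed.

Lemma stage_unprovable n : ~ G'prov (stage n).1 (stage n).2.
Proof.
  induction n as [|n IH]; [exact G0_D0_unprovable|].
  pose proof (stage_step n) as Hstep. destruct (stage n) as [G D]; cbn in IH.
  destruct Hstep as [[Hr ->]|[Hr ->]]; cbn; [|exact Hr].
  apply add_left_unprovable. intros Hl. apply IH.
  apply (G'prov_weaken (P_cut Hr Hl)); solve_incl.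
Qed.

Lemma stage_succ_incl n :
  incl (stage n).1 (stage (S n)).1 /\ incl (stage n).2 (stage (S n)).2.
Proof.
  pose proof (stage_step n) as Hstep. destruct (stage n) as [G D].
  destruct Hstep as [[_ ->]|[_ ->]]; cbn; split; try solve_incl.
  intros f Hf. apply add_left_incl. cbn; auto.
Qed.

Lemma stage_incl {n m} :
  n <= m -> incl (stage n).1 (stage m).1 /\ incl (stage n).2 (stage m).2.
Proof.
  induction 1 as [|m _ [IH1 IH2]]; [split; apply incl_refl|].
  destruct (stage_succ_incl m). split; eapply incl_tran; eauto.
Qed.

Definition Gw f := exists n, In f (stage n).1.
Definition Dw f := exists n, In f (stage n).2.

Lemma Gw_Dw_unprovable {G D} :
  (forall g, In g G -> Gw g) -> (forall d, In d D -> Dw d) -> ~ G'prov G D.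
Proof.
  intros HG HD Hp.
  destruct (incl_chain_stage (fun n => (stage n).1) (fun n m h => proj1 (stage_incl h)) G HG)
    as [N1 H1].
  destruct (incl_chain_stage (fun n => (stage n).2) (fun n m h => proj2 (stage_incl h)) D HD)
    as [N2 H2].
  apply (stage_unprovable (max N1 N2)), (G'prov_weaken Hp).
  - eapply incl_tran; [exact H1|apply (stage_incl (n := N1)); lia].
  - eapply incl_tran; [exact H2|apply (stage_incl (n := N2)); lia].
Qed.

Lemma Gw_or_Dw f : Gw f \/ Dw f.
Proof.
  destruct (lform_enum_surj f) as [n <-].
  pose proof (stage_step n) as Hstep. destruct (stage n) as [G D].
  destruct Hstep as [[_ Hs]|[_ Hs]]; [left|right]; exists (S n); rewrite Hs; cbn; [|auto].
  apply add_left_incl. cbn; auto.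
Qed.

Lemma Gw_not_Dw {f} : Gw f -> ~ Dw f.
Proof.
  intros HG HD. destruct f as [i phi].
  apply (Gw_Dw_unprovable (G := [(i, phi)]) (D := [(i, phi)])).
  - intros g [<-|[]]; exact HG.
  - intros d [<-|[]]; exact HD.
  - apply G'prov_id.
Qed.

Lemma Gw_derivable {G D} :
  (forall g, In g G -> Gw g) -> G'prov G D -> exists d, In d D /\ Gw d.
Proof.
  intros HG Hp. apply NNPP. intros Hn.
  apply (Gw_Dw_unprovable HG (D := D)); auto.
  intros d Hd. destruct (Gw_or_Dw d); auto. exfalso. apply Hn. eauto.
Qed.

Lemma Gw_derivable1 {g f} : Gw g -> G'prov [g] [f] -> Gw f.
Proof.
  intros Hg Hp. destruct (Gw_derivable (G := [g]) (D := [f])) as [d [[<-|[]] Hd]]; auto.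
  intros x [<-|[]]; exact Hg.
Qed.

Lemma Gw_derivable2 {g1 g2 f} : Gw g1 -> Gw g2 -> G'prov [g1; g2] [f] -> Gw f.
Proof.
  intros Hg1 Hg2 Hp.
  destruct (Gw_derivable (G := [g1; g2]) (D := [f])) as [d [[<-|[]] Hd]]; auto.
  intros x [<-|[<-|[]]]; assumption.
Qed.

Lemma Gw_dia_witness {i a phi} :
  Gw (i, FDia a phi) -> exists j, Gw (i, FDia a (FNom j)) /\ Gw (j, phi).
Proof.
  intros Hw. destruct (lform_enum_surj (i, FDia a phi)) as [n Hn].
  pose proof (stage_step n) as Hstep. destruct (stage n) as [G D].
  rewrite Hn in Hstep. destruct Hstep as [[_ Hs]|[_ Hs]].
  - exists (fresh_nom ((i, FDia a phi) :: G) D).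
    split; exists (S n); rewrite Hs; cbn; auto.
  - exfalso. apply (Gw_not_Dw Hw). exists (S n). rewrite Hs. cbn; auto.
Qed.

Lemma Gw_nom_refl i : Gw (i, FNom i).
Proof.
  destruct (Gw_derivable (G := []) (D := [(i, FNom i)])) as [d [[<-|[]] Hd]].
  - intros g [].
  - apply (P_atT (i := i)), P_ax_nom.
  - exact Hd.
Qed.

Lemma Gw_nom_sym {i j} : Gw (i, FNom j) -> Gw (j, FNom i).
Proof.
  intros Hij. apply (Gw_derivable1 Hij), (P_atT (i := i)).
  apply (G'prov_weaken (G := [(i, FNom j); (i, FNom i)]) (D := [(j, FNom i)]));
    [|solve_incl|solve_incl].
  apply P_at5, P_ax_nom.
Qed.

Lemma Gw_nom_trans {i j k} : Gw (i, FNom j) -> Gw (j, FNom k) -> Gw (i, FNom k).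
Proof.
  intros Hij Hjk. apply (Gw_derivable2 (Gw_nom_sym Hij) Hjk), P_at5, P_ax_nom.
Qed.

Lemma Gw_bot i : ~ Gw (i, FBot).
Proof.
  intros Hw. destruct (Gw_derivable (G := [(i, FBot)]) (D := [])) as [d [[] _]].
  - intros g [<-|[]]. exact Hw.
  - apply P_bot.
Qed.

Lemma Gw_imp i a b : Gw (i, FImp a b) <-> (Gw (i, a) -> Gw (i, b)).
Proof.
  split.
  - intros Hab Ha. apply (Gw_derivable2 Hab Ha), P_impL; [|apply G'prov_id].
    apply (G'prov_weaken (G'prov_id a i [] [(i, b)])); solve_incl.
  - intros Hab. destruct (Gw_or_Dw (i, a)) as [Ha|Ha].
    + apply (Gw_derivable1 (Hab Ha)), P_impR.
      apply (G'prov_weaken (G'prov_id b i [(i, a)] [])); solve_incl.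
    + destruct (Gw_derivable (G := []) (D := [(i, FImp a b); (i, a)]))
        as [d [[<-|[<-|[]]] Hd]]; [intros g []| |exact Hd|contradiction (Gw_not_Dw Hd)].
      apply P_impR. apply (G'prov_weaken (G'prov_id a i [] [(i, b)])); solve_incl.
Qed.

Lemma Gw_at i j a : Gw (j, FAt i a) <-> Gw (i, a).
Proof.
  split; intros Hw; apply (Gw_derivable1 Hw).
  - apply P_atL, G'prov_id.
  - apply P_atR, G'prov_id.
Qed.

Lemma Gw_nom_subst {i j phi} :
  Gw (i, FNom j) -> Gw (i, phi) ->
  (exists p, phi = FProp p) \/ phi = FBot \/ (exists a k, phi = FDia a (FNom k)) ->
  Gw (j, phi).
Proof.
  intros Hij Hi Hphi. apply (Gw_derivable2 Hij Hi), P_S1, G'prov_id. exact Hphi.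
Qed.

Lemma Gw_dia_intro {i j a phi} :
  Gw (i, FDia a (FNom j)) -> Gw (j, phi) -> Gw (i, FDia a phi).
Proof.
  intros Hij Hj. apply (Gw_derivable2 Hij Hj), P_diaR.
  apply (G'prov_weaken (G'prov_id phi j [(i, FDia a (FNom j))] [(i, FDia a phi)]));
    solve_incl.
Qed.

Definition nom_class (i : nom) : nom -> Prop := fun k => Gw (i, FNom k).

Lemma nom_class_eq i j : nom_class i = nom_class j <-> Gw (i, FNom j).
Proof.
  split.
  - intros Hij. apply Gw_nom_sym. change (nom_class j i). rewrite <- Hij. apply Gw_nom_refl.
  - intros Hij. apply functional_extensionality. intros k.
    apply propositional_extensionality. unfold nom_class. split; intros Hk.
    + exact (Gw_nom_trans (Gw_nom_sym Hij) Hk).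
    + exact (Gw_nom_trans Hij Hk).
Qed.

Definition canonical_model : model Mod :=
  Model (fun a X Y => exists i j, X = nom_class i /\ Y = nom_class j /\ Gw (i, FDia a (FNom j)))
    nom_class (fun p X => exists i, X = nom_class i /\ Gw (i, FProp p)).

Lemma truth_lemma phi : forall i, sat canonical_model (nom_class i) phi <-> Gw (i, phi).
Proof.
  induction phi as [p|k| |a IHa b IHb|k a IHa|m a IHa]; intros i; cbn.
  - split; [|exists i; auto].
    intros [k [Hik Hk]]. apply nom_class_eq, Gw_nom_sym in Hik.
    apply (Gw_nom_subst Hik Hk). left; eauto.
  - rewrite nom_class_eq. split; apply Gw_nom_sym.
  - split; [tauto|apply Gw_bot].
  - rewrite IHa IHb. symmetry. apply Gw_imp.
  - rewrite IHa. symmetry. apply Gw_at.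
  - split.
    + intros [Y [[i' [j [Hi [-> Hd]]]] Hj]].
      apply nom_class_eq, Gw_nom_sym in Hi. apply IHa in Hj.
      apply (Gw_dia_intro (Gw_nom_subst Hi Hd ltac:(right; right; eauto)) Hj).
    + intros Hw. destruct (Gw_dia_witness Hw) as [j [Hij Hj]].
      exists (nom_class j). split; [exists i, j; auto|apply IHa, Hj].
Qed.

Lemma unprovable_not_valid : ~ valid G0 D0.
Proof.
  intros Hv. destruct (Hv canonical_model (nom_class 0)) as [[i phi] [Hd Hs]].
  - intros [i phi] Hg. unfold sat_l; cbn. apply truth_lemma. exists 0. exact Hg.
  - unfold sat_l in Hs; cbn in Hs. apply truth_lemma in Hs.
    apply (Gw_not_Dw Hs). exists 0. exact Hd.
Qed.

End Completeness.

Lemma completeness (Mod : countType) (G D : list (lform Mod)) : valid G D -> G'prov G D.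
Proof.
  intros Hv. apply NNPP. intros Hn. exact (unprovable_not_valid _ _ _ Hn Hv).
Qed.

Theorem theorem5 (Mod : finType) (G D : list (lform Mod)) :
  valid G D <-> G'prov G D.
Proof. split; [apply completeness|apply soundness]. Qed.
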